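(* Let $\nu>-1$ be real and let $0<a<b$ be two consecutive positive zeros of $J_\nu(\cdot;q^2)$. Then each of the functions $J_{\nu-1}(\cdot;q^2)$ and $J_{\nu+1}(\cdot;q^2)$ has at least one zero in the open interval $(a,b)$.
   Context: Fix $0<q<1$. For $a\in\mathbb C$ put $(a;q)_0=1$, $(a;q)_k=\prod_{i=0}^{k-1}(1-aq^i)$, $(a;q)_\infty=\prod_{i\ge0}(1-aq^i)$. For $\nu\in\mathbb C$ and $x\in\mathbb C\setminus\{0\}$ the Hahn–Exton $q$-Bessel function is $$J_\nu(x;q^2)=\frac{x^\nu}{(q^2;q^2)_\infty}\sum_{k=0}^\infty\frac{(-1)^kq^{k(k+1)}(q^{2\nu+2k+2};q^2)_\infty}{(q^2;q^2)_k}\,x^{2k},$$ with $x^\nu=\exp(\nu\operatorname{Log}x)$ (principal branch). *)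

From Stdlib Require Import Reals.
From Coquelicot Require Import Coquelicot.
Open Scope R_scope.

Fixpoint qpoch (a p : R) (k : nat) : R :=
  match k with
  | O => 1
  | S k' => qpoch a p k' * (1 - a * p ^ k')
  end.

Definition qpoch_inf (a p : R) : R := real (Lim_seq (fun k => qpoch a p k)).

(* Hahn–Exton q-Bessel function J_nu(x;q^2) for real nu and real x > 0
   (where x^nu = exp(nu ln x) is the principal branch, i.e. Rpower). *)
Definition HEJ (q nu x : R) : R :=
  Rpower x nu / qpoch_inf (q ^ 2) (q ^ 2) *
  Series (fun k : nat =>
    (-1) ^ k * q ^ (k * (k + 1)) * qpoch_inf (Rpower q (2 * nu + 2 * INR k + 2)) (q ^ 2)
    / qpoch (q ^ 2) (q ^ 2) k * x ^ (2 * k)).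

(* Put p = q^2 and c = q^(2 nu).  J_nu(x;q^2) is a positive multiple of g(x^2), where the entire
   power series g satisfies the q-difference equation
     g(z) = (1 + c - p z) g(p z) - c g(p^2 z),
   and J_(nu-1)(x), x^2 J_(nu+1)(x) are positive multiples of g(x^2) - c g(p x^2) and
   g(x^2) - g(x^2 / p).  Differentiating the equation shows that
     W(X) = p g(X) g'(p X) - g'(X) g(p X)
   satisfies W(X) = p g(p X)^2 + c p W(p X); as c p < 1 (this is where nu > -1 enters) and
   g(0) > 0, W is positive everywhere.  At a zero X of g this says g'(X) g(p X) < 0.  The
   derivatives at consecutive zeros A < B of g have opposite signs, hence so do g(p A) and g(p B);
   since moreover g(X / p) = - c g(p X) at a zero, both differences above change sign between
   a and b, and the intermediate value theorem gives the zeros. *)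

From Stdlib Require Import Reals Lra Lia Psatz.
From Coquelicot Require Import Coquelicot.
Open Scope R_scope.

(** * q-Pochhammer symbols *)

Lemma qpoch_shift (a p : R) (k : nat) :
  qpoch a p (S k) = (1 - a) * qpoch (a * p) p k.
Proof. induction k as [|k IH]; cbn in *; [ring | rewrite IH; ring]. Qed.

Lemma real_Rbar_mult (r : R) (l : Rbar) : real (Rbar_mult r l) = r * real l.
Proof.
  destruct l as [x| |]; cbn; try reflexivity; unfold Rbar_mult';
  destruct (Rle_dec 0 r) as [H|H]; try destruct (Rle_lt_or_eq_dec 0 r H); cbn; ring.
Qed.

Lemma qpoch_inf_shift (a p : R) : qpoch_inf a p = (1 - a) * qpoch_inf (a * p) p.
Proof.
  unfold qpoch_inf. rewrite <- Lim_seq_incr_1.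
  rewrite (Lim_seq_ext _ (fun k => (1 - a) * qpoch (a * p) p k)) by apply qpoch_shift.
  now rewrite Lim_seq_scal_l, real_Rbar_mult.
Qed.

Lemma qpoch_inf_split (a p : R) (N : nat) :
  qpoch_inf a p = qpoch a p N * qpoch_inf (a * p ^ N) p.
Proof.
  induction N as [|N IH]; cbn.
  - now rewrite Rmult_1_r, Rmult_1_l.
  - rewrite IH, (qpoch_inf_shift (a * p ^ N)).
    replace (a * p ^ N * p) with (a * (p * p ^ N)) by ring. ring.
Qed.

Lemma pow_unit_interval (x : R) (n : nat) : 0 <= x <= 1 -> 0 <= x ^ n <= 1.
Proof.
  intros Hx. split; [now apply pow_le|].
  rewrite <- (pow1 n). apply pow_incr. lra.
Qed.

Lemma qpoch_pos (a p : R) (k : nat) : 0 <= a < 1 -> 0 <= p <= 1 -> 0 < qpoch a p k.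
Proof.
  intros Ha Hp. induction k as [|k IH]; cbn; [lra|].
  assert (0 <= p ^ k <= 1) by (apply pow_unit_interval; lra).
  assert (a * p ^ k < 1) by nra.
  apply Rmult_lt_0_compat; lra.
Qed.

Lemma qpoch_bounds (a p : R) (k : nat) : 0 <= a < 1 -> 0 <= p < 1 ->
  1 - a * (1 - p ^ k) / (1 - p) <= qpoch a p k <= 1.
Proof.
  intros Ha Hp. induction k as [|k IH]; cbn.
  { rewrite Rminus_diag, Rmult_0_r, Rdiv_0_l. lra. }
  assert (0 <= p ^ k <= 1) by (apply pow_unit_interval; lra).
  pose proof (qpoch_pos a p k Ha ltac:(lra)).
  assert (Hstep : a * (1 - p * p ^ k) / (1 - p) = a * (1 - p ^ k) / (1 - p) + a * p ^ k)
    by (field; lra).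
  rewrite Hstep. assert (0 <= a * p ^ k < 1) by nra.
  set (t := a * p ^ k) in *. nra.
Qed.

Lemma qpoch_decr (a p : R) (k : nat) : 0 <= a < 1 -> 0 <= p < 1 ->
  qpoch a p (S k) <= qpoch a p k.
Proof.
  intros Ha Hp. cbn. assert (0 <= p ^ k) by (apply pow_le; lra).
  pose proof (qpoch_pos a p k Ha ltac:(lra)).
  assert (0 <= a * p ^ k) by nra. set (t := a * p ^ k) in *. nra.
Qed.

Lemma Lim_seq_decr_ge (u : nat -> R) (L : R) :
  (forall n, u (S n) <= u n) -> (forall n, L <= u n) -> L <= real (Lim_seq u).
Proof.
  intros Hdecr HL.
  assert (Hu0 : forall n, u n <= u O).
  { induction n as [|n IH]; [lra | pose proof (Hdecr n); lra]. }
  pose proof (Lim_seq_correct u (ex_lim_seq_decr u Hdecr)) as Hu.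
  pose proof (is_lim_seq_le _ _ _ _ HL (is_lim_seq_const L) Hu) as Hlo.
  pose proof (is_lim_seq_le _ _ _ _ Hu0 Hu (is_lim_seq_const (u O))) as Hhi.
  destruct (Lim_seq u); cbn in *; easy.
Qed.

Lemma qpoch_inf_ge (a p : R) : 0 <= a < 1 -> 0 <= p < 1 ->
  1 - a / (1 - p) <= qpoch_inf a p.
Proof.
  intros Ha Hp. apply Lim_seq_decr_ge; [intro n; now apply qpoch_decr|].
  intro n. eapply Rle_trans; [|apply qpoch_bounds; assumption].
  assert (0 <= p ^ n) by (apply pow_le; lra).
  unfold Rdiv. apply Rplus_le_compat_l, Ropp_le_contravar, Rmult_le_compat_r.
  - apply Rlt_le, Rinv_0_lt_compat. lra.
  - nra.
Qed.

Lemma qpoch_inf_pos (a p : R) : 0 <= a < 1 -> 0 < p < 1 -> 0 < qpoch_inf a p.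
Proof.
  intros Ha Hp.
  destruct (pow_lt_1_zero p ltac:(rewrite Rabs_pos_eq; lra) (1 - p) ltac:(lra)) as [N HN].
  specialize (HN N (le_n N)). rewrite Rabs_pos_eq in HN by (apply pow_le; lra).
  assert (Hpn : 0 <= p ^ N) by (apply pow_le; lra).
  assert (HaN : 0 <= a * p ^ N < 1 - p) by nra.
  rewrite (qpoch_inf_split a p N).
  apply Rmult_lt_0_compat; [apply qpoch_pos; lra|].
  eapply Rlt_le_trans; [|apply qpoch_inf_ge; lra].
  apply Rlt_0_minus. apply Rlt_div_l; lra.
Qed.

(** * The power series behind J_nu *)

Definition hej_coef (q nu : R) (k : nat) : R :=
  (-1) ^ k * q ^ (k * (k + 1)) * qpoch_inf (Rpower q (2 * nu + 2 * INR k + 2)) (q ^ 2)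
    / qpoch (q ^ 2) (q ^ 2) k.

Lemma Rpower_plus_pow (q s : R) (k : nat) : 0 < q ->
  Rpower q (s + INR k) = Rpower q s * q ^ k.
Proof. intros Hq. now rewrite Rpower_plus, Rpower_pow. Qed.

Lemma Rpower_plus_2INR (q s : R) (k : nat) : 0 < q ->
  Rpower q (s + 2 * INR k) = Rpower q s * (q ^ 2) ^ k.
Proof.
  intros Hq. rewrite <- pow_mult, <- Rpower_plus_pow by exact Hq.
  now rewrite mult_INR.
Qed.

Lemma Rpower_plus_2 (q s : R) : 0 < q -> Rpower q (s + 2) = Rpower q s * q ^ 2.
Proof. intros Hq. exact (Rpower_plus_pow q s 2 Hq). Qed.

Lemma Rpower_lt_1 (q s : R) : 0 < q < 1 -> 0 < s -> 0 < Rpower q s < 1.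
Proof.
  intros Hq Hs. unfold Rpower. split; [apply exp_pos|].
  rewrite <- exp_0. apply exp_increasing.
  assert (ln q < 0) by (rewrite <- ln_1; apply ln_increasing; lra).
  nra.
Qed.

Lemma Rpower_2nu_mul_sq_lt_1 (q nu : R) : 0 < q < 1 -> -1 < nu ->
  0 < Rpower q (2 * nu) * q ^ 2 < 1.
Proof.
  intros Hq Hnu. rewrite <- Rpower_plus_2 by lra. apply Rpower_lt_1; lra.
Qed.

Lemma pow2_in_unit_interval (q : R) : 0 < q < 1 -> 0 < q ^ 2 < 1.
Proof. intros Hq. split; [apply pow_lt; lra | apply pow_lt_1_compat; [lra | lia]]. Qed.

Section Coefficients.
Variables q nu : R.
Hypothesis Hq : 0 < q < 1.

Let p := q ^ 2.
Let c := Rpower q (2 * nu).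

Lemma hej_coef_pred (k : nat) :
  hej_coef q (nu - 1) k = (1 - c * p ^ k) * hej_coef q nu k.
Proof.
  unfold hej_coef.
  replace (2 * (nu - 1) + 2 * INR k + 2) with (2 * nu + 2 * INR k) by ring.
  rewrite Rpower_plus_2INR, qpoch_inf_shift by lra.
  replace (Rpower q (2 * nu) * (q ^ 2) ^ k * q ^ 2) with (Rpower q (2 * nu + 2 * INR k + 2))
    by (now rewrite Rpower_plus_2, Rpower_plus_2INR by lra).
  fold p c. unfold Rdiv. ring.
Qed.

Lemma hej_coef_succ (k : nat) :
  hej_coef q (nu + 1) k * p ^ S k = - (1 - p ^ S k) * hej_coef q nu (S k).
Proof.
  unfold hej_coef. fold p.
  pose proof (pow2_in_unit_interval q Hq) as Hp; fold p in Hp.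
  pose proof (qpoch_pos p p k ltac:(lra) ltac:(lra)).
  assert (Hpk : p * p ^ k < 1) by (pose proof (pow_unit_interval p k ltac:(lra)); nra).
  replace (2 * nu + 2 * INR (S k) + 2) with (2 * (nu + 1) + 2 * INR k + 2)
    by (rewrite S_INR; ring).
  replace (S k * (S k + 1))%nat with (k * (k + 1) + 2 * S k)%nat by lia.
  rewrite pow_add, (pow_mult q 2 (S k)). fold p. cbn [qpoch pow]. field. lra.
Qed.

End Coefficients.

Lemma hej_coef_rec (q nu : R) (k : nat) : 0 < q < 1 ->
  hej_coef q nu (S k) * (1 - (q ^ 2) ^ S k) * (1 - Rpower q (2 * nu) * (q ^ 2) ^ S k)
  = - (q ^ 2) ^ S k * hej_coef q nu k.
Proof.
  intros Hq.
  pose proof (hej_coef_pred q (nu + 1) Hq k) as Hpred.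
  replace (nu + 1 - 1) with nu in Hpred by ring.
  replace (2 * (nu + 1)) with (2 * nu + 2) in Hpred by ring.
  rewrite Rpower_plus_2 in Hpred by lra.
  rewrite Hpred.
  transitivity (- (1 - Rpower q (2 * nu) * (q ^ 2) ^ S k)
                * (hej_coef q (nu + 1) k * (q ^ 2) ^ S k)).
  - rewrite hej_coef_succ by exact Hq. ring.
  - cbn [pow]. ring.
Qed.

Section Radius.
Variables q nu : R.
Hypothesis Hq : 0 < q < 1.
Hypothesis Hnu : -1 < nu.

Let p := q ^ 2.
Let c := Rpower q (2 * nu).

Lemma hej_coef_neq0 (k : nat) : hej_coef q nu k <> 0.
Proof.
  pose proof (pow2_in_unit_interval q Hq) as Hp; fold p in Hp.
  assert (HI : 0 < Rpower q (2 * nu + 2 * INR k + 2) < 1).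
  { apply Rpower_lt_1; [exact Hq|]. pose proof (pos_INR k). lra. }
  pose proof (qpoch_inf_pos (Rpower q (2 * nu + 2 * INR k + 2)) p ltac:(lra) Hp).
  pose proof (qpoch_pos p p k ltac:(lra) ltac:(lra)).
  unfold hej_coef. fold p. unfold Rdiv.
  repeat apply Rmult_integral_contrapositive_currified;
    try apply pow_nonzero; try apply Rinv_neq_0_compat; lra.
Qed.

Lemma hej_coef_ratio (k : nat) :
  hej_coef q nu (S k) / hej_coef q nu k
  = - p ^ S k / ((1 - p ^ S k) * (1 - c * p ^ S k)).
Proof.
  pose proof (Rpower_2nu_mul_sq_lt_1 q nu Hq Hnu) as Hcp; fold p c in Hcp.
  pose proof (pow2_in_unit_interval q Hq) as Hp; fold p in Hp.
  pose proof (pow_unit_interval p k ltac:(lra)).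
  assert (HpS : p ^ S k < 1) by (apply pow_lt_1_compat; [lra | lia]).
  assert (HcpS : c * p ^ S k < 1).
  { rewrite <- tech_pow_Rmult, <- Rmult_assoc. nra. }
  pose proof (hej_coef_rec q nu k Hq) as Hrec. fold p c in Hrec.
  pose proof (hej_coef_neq0 k).
  field_simplify_eq; [|repeat split; lra].
  replace (- hej_coef q nu k * p ^ S k) with (- p ^ S k * hej_coef q nu k) by ring.
  rewrite <- Hrec. ring.
Qed.

Lemma hej_coef_radius : CV_radius (hej_coef q nu) = p_infty.
Proof.
  apply CV_radius_infinite_DAlembert; [exact hej_coef_neq0|].
  pose proof (Rpower_2nu_mul_sq_lt_1 q nu Hq Hnu) as Hcp; fold p c in Hcp.
  pose proof (pow2_in_unit_interval q Hq) as Hp; fold p in Hp.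
  set (x n := p ^ S n).
  assert (Hx : is_lim_seq x 0).
  { apply (is_lim_seq_incr_1 (fun n => p ^ n)), is_lim_seq_geom. rewrite Rabs_pos_eq; lra. }
  assert (Hden : is_lim_seq (fun n => (1 - x n) * (1 - c * x n)) ((1 - 0) * (1 - c * 0))).
  { apply is_lim_seq_mult'; apply is_lim_seq_minus'; try apply is_lim_seq_const; [exact Hx|].
    apply is_lim_seq_mult'; [apply is_lim_seq_const | exact Hx]. }
  pose proof (is_lim_seq_div' _ _ _ _ Hx Hden ltac:(lra)) as Hlim.
  replace (0 / ((1 - 0) * (1 - c * 0))) with 0 in Hlim by field.
  apply (is_lim_seq_ext (fun n => x n / ((1 - x n) * (1 - c * x n)))); [|exact Hlim].
  intro n. rewrite hej_coef_ratio. fold (x n).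
  pose proof (pow_unit_interval p n ltac:(lra)).
  assert (0 <= x n < 1) by (apply pow_lt_1_compat; [lra | lia]).
  assert (c * x n < 1).
  { unfold x. rewrite <- tech_pow_Rmult, <- Rmult_assoc. nra. }
  rewrite Rdiv_opp_l, Rabs_Ropp, Rabs_pos_eq; [reflexivity|].
  apply Rdiv_le_0_compat; [lra|]. apply Rmult_lt_0_compat; lra.
Qed.
End Radius.

Lemma Series_lincomb (a b d : nat -> R) (x y : R) :
  ex_series a -> ex_series b -> ex_series d ->
  ex_series (fun k => a k - x * b k + y * d k) /\
  Series (fun k => a k - x * b k + y * d k) = Series a - x * Series b + y * Series d.
Proof.
  intros Ha Hb Hd.
  assert (Hxb : ex_series (fun k => x * b k))
    by now apply (@ex_series_scal_l R_AbsRing R_CompleteNormedModule).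
  assert (Hyd : ex_series (fun k => y * d k))
    by now apply (@ex_series_scal_l R_AbsRing R_CompleteNormedModule).
  assert (Hab : ex_series (fun k => a k - x * b k))
    by now apply (@ex_series_minus R_AbsRing R_CompleteNormedModule).
  split; [now apply (@ex_series_plus R_AbsRing R_CompleteNormedModule)|].
  now rewrite Series_plus, Series_minus, !Series_scal_l.
Qed.

Definition hej_series (q nu : R) : R -> R := PSeries (hej_coef q nu).

Lemma HEJ_hej_series (q nu x : R) :
  HEJ q nu x = Rpower x nu / qpoch_inf (q ^ 2) (q ^ 2) * hej_series q nu (x ^ 2).
Proof.
  unfold HEJ, hej_series, PSeries. f_equal. apply Series_ext. intro k.
  now rewrite <- pow_mult.
Qed.

Section Series.
Variables q nu : R.
Hypothesis Hq : 0 < q < 1.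
Hypothesis Hnu : -1 < nu.

Let p := q ^ 2.
Let c := Rpower q (2 * nu).
Let g := hej_series q nu.

Lemma hej_series_ex (z : R) : ex_series (fun k => hej_coef q nu k * z ^ k).
Proof.
  apply ex_pseries_R, CV_radius_inside. now rewrite hej_coef_radius.
Qed.

Lemma hej_series_comb (z : R) :
  ex_series (fun k => hej_coef q nu k * ((1 - p ^ k) * (1 - c * p ^ k)) * z ^ k) /\
  Series (fun k => hej_coef q nu k * ((1 - p ^ k) * (1 - c * p ^ k)) * z ^ k)
  = g z - (1 + c) * g (p * z) + c * g (p * (p * z)).
Proof.
  destruct (Series_lincomb _ _ _ (1 + c) c (hej_series_ex z) (hej_series_ex (p * z))
              (hej_series_ex (p * (p * z)))) as [Hex Hsum].
  assert (Hext : forall k, hej_coef q nu k * z ^ k - (1 + c) * (hej_coef q nu k * (p * z) ^ k)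
                   + c * (hej_coef q nu k * (p * (p * z)) ^ k)
                 = hej_coef q nu k * ((1 - p ^ k) * (1 - c * p ^ k)) * z ^ k).
  { intro k. rewrite !Rpow_mult_distr. ring. }
  split; [exact (ex_series_ext _ _ Hext Hex)|].
  rewrite <- (Series_ext _ _ Hext). exact Hsum.
Qed.

Lemma hej_series_rec (z : R) :
  g z = (1 + c - p * z) * g (p * z) - c * g (p * (p * z)).
Proof.
  destruct (hej_series_comb z) as [Hex Hsum].
  enough (H : g z - (1 + c) * g (p * z) + c * g (p * (p * z)) = - (p * z) * g (p * z)) by lra.
  rewrite <- Hsum, Series_incr_1 by exact Hex.
  rewrite Rminus_diag, Rmult_0_l, Rmult_0_r, Rmult_0_l, Rplus_0_l.
  unfold g, hej_series, PSeries. rewrite <- Series_scal_l.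
  apply Series_ext. intro k.
  rewrite <- Rmult_assoc, hej_coef_rec by exact Hq. fold p c.
  rewrite Rpow_mult_distr. cbn [pow]. ring.
Qed.

Lemma hej_series_at_0 : 0 < g 0.
Proof.
  unfold g, hej_series. rewrite PSeries_0. unfold hej_coef. cbn.
  rewrite Rmult_0_r, Rplus_0_r, !Rmult_1_l, Rdiv_1_r.
  pose proof (pow2_in_unit_interval q Hq).
  apply qpoch_inf_pos; [|lra].
  pose proof (Rpower_lt_1 q (2 * nu + 2) Hq ltac:(lra)). lra.
Qed.

Lemma hej_series_continuous (z : R) : continuity_pt g z.
Proof. apply PSeries_continuity. now rewrite hej_coef_radius. Qed.

Lemma hej_series_derive (z : R) :
  is_derive g z (PSeries (PS_derive (hej_coef q nu)) z).
Proof. apply is_derive_PSeries. now rewrite hej_coef_radius. Qed.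

Lemma hej_series_derive_continuous (z : R) :
  continuity_pt (PSeries (PS_derive (hej_coef q nu))) z.
Proof. apply PSeries_continuity. now rewrite CV_radius_derive, hej_coef_radius. Qed.

Lemma HEJ_pred (x : R) :
  HEJ q (nu - 1) x = Rpower x (nu - 1) / qpoch_inf p p * (g (x ^ 2) - c * g (p * x ^ 2)).
Proof.
  rewrite HEJ_hej_series. f_equal. unfold g, hej_series, PSeries.
  rewrite <- Series_scal_l, <- Series_minus.
  - apply Series_ext. intro k. rewrite hej_coef_pred by exact Hq. fold p c.
    rewrite Rpow_mult_distr. ring.
  - apply hej_series_ex.
  - apply (@ex_series_scal_l R_AbsRing R_CompleteNormedModule), hej_series_ex.
Qed.

Lemma HEJ_succ (x : R) : x <> 0 ->
  HEJ q (nu + 1) x * x ^ 2 = Rpower x (nu + 1) / qpoch_inf p p * (g (x ^ 2) - g (x ^ 2 / p)).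
Proof.
  intros Hx. rewrite HEJ_hej_series, Rmult_assoc. fold p. f_equal.
  pose proof (pow2_in_unit_interval q Hq) as Hp. fold p in Hp.
  set (z := x ^ 2).
  unfold g, hej_series, PSeries. rewrite <- Series_minus by apply hej_series_ex.
  rewrite (Series_incr_1 (fun k => hej_coef q nu k * z ^ k - hej_coef q nu k * (z / p) ^ k)).
  2: { apply (@ex_series_minus R_AbsRing R_CompleteNormedModule); apply hej_series_ex. }
  cbn [pow]. rewrite Rminus_diag, Rplus_0_l, Rmult_comm, <- Series_scal_l.
  apply Series_ext. intro k.
  assert (Hpk : 0 < p ^ S k) by (apply pow_lt; lra).
  apply (Rmult_eq_reg_r (p ^ S k)); [|lra].
  transitivity (hej_coef q (nu + 1) k * p ^ S k * z ^ S k); [cbn [pow]; ring|].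
  rewrite hej_coef_succ by exact Hq. fold p.
  unfold Rdiv. rewrite Rpow_mult_distr, pow_inv. cbn [pow].
  field. repeat split; try apply pow_nonzero; lra.
Qed.
End Series.

(** * Signs near consecutive roots *)

Lemma IVT_open (f : R -> R) (a b : R) : (forall x, continuity_pt f x) -> a < b ->
  f a * f b < 0 -> exists x, a < x < b /\ f x = 0.
Proof.
  intros Hf Hab Hsign.
  destruct (IVT_cor f a b Hf ltac:(lra) ltac:(lra)) as [x [Hx Hfx]].
  exists x. split; [|exact Hfx].
  destruct (Req_dec x a) as [->|]; [rewrite Hfx in Hsign; lra|].
  destruct (Req_dec x b) as [->|]; [rewrite Hfx in Hsign; lra|].
  lra.
Qed.

Lemma rootless_same_sign (f : R -> R) (a b y1 y2 : R) : (forall x, continuity_pt f x) ->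
  (forall y, a < y < b -> f y <> 0) -> a < y1 < b -> a < y2 < b -> 0 < f y1 * f y2.
Proof.
  intros Hf Hroot Hy1 Hy2.
  destruct (Rlt_or_le 0 (f y1 * f y2)) as [|Hle]; [assumption | exfalso].
  assert (Hneg : f y1 * f y2 < 0).
  { destruct Hle as [|Heq]; [assumption|].
    destruct (Rmult_integral _ _ Heq) as [H|H];
      [destruct (Hroot y1 Hy1 H) | destruct (Hroot y2 Hy2 H)]. }
  destruct (Rtotal_order y1 y2) as [Hlt|[<-|Hgt]]; [| nra |].
  - destruct (IVT_open f y1 y2 Hf Hlt Hneg) as [x [Hx Hfx]]. apply (Hroot x); [lra | exact Hfx].
  - rewrite Rmult_comm in Hneg.
    destruct (IVT_open f y2 y1 Hf Hgt Hneg) as [x [Hx Hfx]]. apply (Hroot x); [lra | exact Hfx].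
Qed.

Lemma is_derive_root_sign (f : R -> R) (x l : R) : is_derive f x l -> f x = 0 -> l <> 0 ->
  exists d, 0 < d /\ forall t, 0 < Rabs t < d -> 0 < f (x + t) * t * l.
Proof.
  intros Hder Hfx Hl. apply is_derive_Reals in Hder.
  destruct (Hder (Rabs l) (Rabs_pos_lt l Hl)) as [d Hd].
  exists d. split; [apply cond_pos|]. intros t [Ht0 Htd].
  assert (Ht : t <> 0) by (intros ->; rewrite Rabs_R0 in Ht0; lra).
  specialize (Hd t Ht Htd). rewrite Hfx, Rminus_0_r in Hd.
  apply Rsqr_lt_abs_1 in Hd. unfold Rsqr in Hd.
  assert (Hq : 0 < f (x + t) / t * l) by nra.
  replace (f (x + t) * t * l) with (f (x + t) / t * l * (t * t)) by (field; exact Ht).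
  apply Rmult_lt_0_compat; [exact Hq | nra].
Qed.

Lemma consecutive_roots_derive_sign (f : R -> R) (A B dA dB : R) :
  (forall x, continuity_pt f x) -> A < B -> f A = 0 -> f B = 0 ->
  (forall y, A < y < B -> f y <> 0) ->
  is_derive f A dA -> is_derive f B dB -> dA <> 0 -> dB <> 0 -> dA * dB < 0.
Proof.
  intros Hf HAB HfA HfB Hroot HdA HdB HA0 HB0.
  destruct (is_derive_root_sign f A dA HdA HfA HA0) as [dlA [HdlA HsA]].
  destruct (is_derive_root_sign f B dB HdB HfB HB0) as [dlB [HdlB HsB]].
  set (tA := Rmin dlA (B - A) / 2). set (tB := Rmin dlB (B - A) / 2).
  assert (HtA : 0 < tA < Rmin dlA (B - A))
    by (unfold tA; pose proof (Rmin_glb_lt dlA (B - A) 0); lra).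
  assert (HtB : 0 < tB < Rmin dlB (B - A))
    by (unfold tB; pose proof (Rmin_glb_lt dlB (B - A) 0); lra).
  pose proof (Rmin_l dlA (B - A)). pose proof (Rmin_r dlA (B - A)).
  pose proof (Rmin_l dlB (B - A)). pose proof (Rmin_r dlB (B - A)).
  assert (SA := HsA tA ltac:(rewrite Rabs_pos_eq; lra)).
  assert (SB := HsB (- tB) ltac:(rewrite Rabs_Ropp, Rabs_pos_eq; lra)).
  assert (Hsame := rootless_same_sign f A B (A + tA) (B + - tB) Hf Hroot ltac:(lra) ltac:(lra)).
  set (uA := f (A + tA)) in *. set (uB := f (B + - tB)) in *.
  assert (0 < uA * dA) by nra.
  assert (uB * dB < 0) by nra.
  assert ((uA * uB) * (dA * dB) < 0) by nra.
  nra.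
Qed.

(** * A Wronskian for the q-difference equation *)

Section Wronskian.
Variables (g dg : R -> R) (p c : R).
Hypothesis Hp : 0 < p < 1.
Hypothesis Hc : 0 < c.
Hypothesis Hcp : c * p < 1.
Hypothesis Hder : forall z, is_derive g z (dg z).
Hypothesis Hdg : forall z, continuity_pt dg z.
Hypothesis Hrec : forall z, g z = (1 + c - p * z) * g (p * z) - c * g (p * (p * z)).
Hypothesis Hg0 : g 0 <> 0.

Definition wronskian (X : R) : R := p * g X * dg (p * X) - dg X * g (p * X).

Lemma is_derive_continuity_pt (z : R) : continuity_pt g z.
Proof.
  apply continuity_pt_filterlim, (@ex_derive_continuous R_AbsRing R_NormedModule).
  exists (dg z). apply Hder.
Qed.

Lemma derivative_rec (z : R) :
  dg z = - p * g (p * z) + (1 + c - p * z) * p * dg (p * z) - c * (p * p) * dg (p * (p * z)).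
Proof.
  rewrite <- (is_derive_unique _ _ _ (Hder z)).
  apply is_derive_unique.
  apply (is_derive_ext (fun z => (1 + c - p * z) * g (p * z) - c * g (p * (p * z)))).
  { intro t. symmetry. apply Hrec. }
  assert (HD : forall t, Derive (fun x => g x) t = dg t)
    by (intro t; exact (is_derive_unique _ _ _ (Hder t))).
  auto_derive.
  - split; [|split]; [exists (dg (p * z)) | exists (dg (p * (p * z))) | ]; easy.
  - rewrite !HD. ring.
Qed.

Lemma wronskian_rec (X : R) : wronskian X = p * g (p * X) ^ 2 + c * p * wronskian (p * X).
Proof.
  unfold wronskian. rewrite (Hrec X), (derivative_rec X). ring.
Qed.

Lemma wronskian_ge_geom (N : nat) (X : R) : (c * p) ^ N * wronskian (p ^ N * X) <= wronskian X.
Proof.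
  induction N as [|N IH]; [rewrite !pow_O, !Rmult_1_l; lra|].
  eapply Rle_trans; [|exact IH].
  rewrite (wronskian_rec (p ^ N * X)).
  replace (p ^ S N * X) with (p * (p ^ N * X)) by (cbn; ring).
  assert (0 <= (c * p) ^ N) by (apply pow_le; nra).
  assert (0 <= p * g (p * (p ^ N * X)) ^ 2) by (apply Rmult_le_pos; [lra | apply pow2_ge_0]).
  cbn [pow]. nra.
Qed.

Lemma wronskian_continuous (X : R) : continuity_pt wronskian X.
Proof.
  pose proof is_derive_continuity_pt as Hg.
  assert (Hscal : forall f, (forall z, continuity_pt f z) -> continuity_pt (fun Y => f (p * Y)) X).
  { intros f Hf. apply (continuity_pt_comp (fun Y => p * Y) f); [|apply Hf].
    apply (continuity_pt_scal id), continuity_pt_id. }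
  apply continuity_pt_minus; apply continuity_pt_mult; try apply Hscal; auto.
  apply (continuity_pt_scal g), Hg.
Qed.

Lemma is_lim_seq_comp_geom (f : R -> R) (X : R) : continuity_pt f 0 ->
  is_lim_seq (fun n => f (p ^ n * X)) (f 0).
Proof.
  intros Hf. apply is_lim_seq_continuous; [exact Hf|].
  assert (Hgeom : Rabs p < 1) by (rewrite Rabs_pos_eq; lra).
  pose proof (is_lim_seq_mult' _ _ _ _ (is_lim_seq_geom p Hgeom) (is_lim_seq_const X)) as H.
  now rewrite Rmult_0_l in H.
Qed.

Lemma wronskian_nonneg (X : R) : 0 <= wronskian X.
Proof.
  assert (Hlim : is_lim_seq (fun N => (c * p) ^ N * wronskian (p ^ N * X)) (0 * wronskian 0)).
  { apply is_lim_seq_mult'; [|apply is_lim_seq_comp_geom, wronskian_continuous].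
    apply is_lim_seq_geom. rewrite Rabs_pos_eq; nra. }
  rewrite Rmult_0_l in Hlim.
  apply (is_lim_seq_le _ _ _ _ (fun N => wronskian_ge_geom N X) Hlim (is_lim_seq_const _)).
Qed.

Lemma wronskian_zero_step (Y : R) : wronskian Y = 0 -> g (p * Y) = 0 /\ wronskian (p * Y) = 0.
Proof.
  intros HY. rewrite wronskian_rec in HY.
  pose proof (wronskian_nonneg (p * Y)). pose proof (pow2_ge_0 (g (p * Y))).
  assert (Hcp0 : 0 < c * p) by nra.
  assert (Hsq : g (p * Y) ^ 2 = 0) by nra.
  split; [apply Rsqr_0_uniq; unfold Rsqr; nra | nra].
Qed.

Lemma wronskian_pos (X : R) : 0 < wronskian X.
Proof.
  destruct (wronskian_nonneg X) as [|Hzero]; [assumption | exfalso].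
  assert (Hvanish : forall n, wronskian (p ^ n * X) = 0).
  { induction n as [|n IH]; [now rewrite pow_O, Rmult_1_l|].
    replace (p ^ S n * X) with (p * (p ^ n * X)) by (cbn; ring).
    exact (proj2 (wronskian_zero_step _ IH)). }
  assert (Hlim : is_lim_seq (fun _ => 0) (g 0)).
  { apply (is_lim_seq_ext (fun n => g (p ^ n * (p * X)))).
    - intro n. replace (p ^ n * (p * X)) with (p * (p ^ n * X)) by ring.
      exact (proj1 (wronskian_zero_step _ (Hvanish n))).
    - apply is_lim_seq_comp_geom, is_derive_continuity_pt. }
  apply is_lim_seq_unique in Hlim. rewrite Lim_seq_const in Hlim.
  injection Hlim. intro H. now apply Hg0.
Qed.

Lemma consecutive_roots_shift_sign (A B : R) : A < B -> g A = 0 -> g B = 0 ->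
  (forall Y, A < Y < B -> g Y <> 0) -> g (p * A) * g (p * B) < 0.
Proof.
  intros HAB HA HB Hroot.
  assert (WA := wronskian_pos A). assert (WB := wronskian_pos B).
  unfold wronskian in WA, WB. rewrite HA in WA. rewrite HB in WB.
  assert (Hd : dg A * dg B < 0).
  { apply (consecutive_roots_derive_sign g A B); auto using is_derive_continuity_pt;
      intro H0; rewrite H0 in *; lra. }
  assert (0 < (dg A * g (p * A)) * (dg B * g (p * B))) by nra.
  nra.
Qed.
End Wronskian.

Lemma continuity_pt_comp_everywhere (f h : R -> R) (x : R) :
  (forall z, continuity_pt f z) -> continuity_pt h x -> continuity_pt (fun y => f (h y)) x.
Proof. intros Hf Hh. apply (continuity_pt_comp h f); [exact Hh | apply Hf]. Qed.

Lemma HEJ_root_iff (q nu x : R) : 0 < q < 1 -> 0 < x ->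
  HEJ q nu x = 0 <-> hej_series q nu (x ^ 2) = 0.
Proof.
  intros Hq Hx. rewrite HEJ_hej_series.
  pose proof (pow2_in_unit_interval q Hq) as Hp.
  assert (Hfactor : 0 < Rpower x nu / qpoch_inf (q ^ 2) (q ^ 2)).
  { apply Rdiv_lt_0_compat; [apply exp_pos | apply qpoch_inf_pos; lra]. }
  split; intro H.
  - destruct (Rmult_integral _ _ H); [lra | assumption].
  - rewrite H. apply Rmult_0_r.
Qed.

Lemma hej_series_roots_shift_sign (q nu A B : R) : 0 < q < 1 -> -1 < nu -> A < B ->
  hej_series q nu A = 0 -> hej_series q nu B = 0 ->
  (forall Y, A < Y < B -> hej_series q nu Y <> 0) ->
  hej_series q nu (q ^ 2 * A) * hej_series q nu (q ^ 2 * B) < 0.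
Proof.
  intros Hq Hnu.
  pose proof (Rpower_2nu_mul_sq_lt_1 q nu Hq Hnu).
  apply (consecutive_roots_shift_sign _ (PSeries (PS_derive (hej_coef q nu))) _ (Rpower q (2 * nu))).
  - now apply pow2_in_unit_interval.
  - apply exp_pos.
  - lra.
  - now apply hej_series_derive.
  - now apply hej_series_derive_continuous.
  - now apply hej_series_rec.
  - pose proof (hej_series_at_0 q nu Hq Hnu). lra.
Qed.

Section Roots.
Variables q nu a b : R.
Hypothesis Hq : 0 < q < 1.
Hypothesis Hnu : -1 < nu.
Hypothesis Hab : 0 < a < b.

Let p := q ^ 2.
Let c := Rpower q (2 * nu).
Let g := hej_series q nu.

Hypothesis Ha : g (a ^ 2) = 0.
Hypothesis Hb : g (b ^ 2) = 0.
Hypothesis Hsign : g (p * a ^ 2) * g (p * b ^ 2) < 0.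

Lemma HEJ_pred_root : exists x, a < x < b /\ HEJ q (nu - 1) x = 0.
Proof.
  pose proof (hej_series_continuous q nu Hq Hnu) as Hg. fold g in Hg.
  set (phi := fun x => g (x ^ 2) - c * g (p * x ^ 2)).
  assert (Hphi : forall x, continuity_pt phi x).
  { intro x. apply (continuity_pt_minus (fun y => g (y ^ 2)) (fun y => c * g (p * y ^ 2))).
    - apply continuity_pt_comp_everywhere; [exact Hg | reg].
    - apply (continuity_pt_scal (fun y => g (p * y ^ 2))).
      apply continuity_pt_comp_everywhere; [exact Hg | reg]. }
  destruct (IVT_open phi a b Hphi ltac:(lra)) as [x [Hx Hphix]].
  { unfold phi. rewrite Ha, Hb. assert (0 < c) by apply exp_pos.
    replace ((0 - c * g (p * a ^ 2)) * (0 - c * g (p * b ^ 2)))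
      with ((c * c) * (g (p * a ^ 2) * g (p * b ^ 2))) by ring.
    rewrite <- (Rmult_0_r (c * c)). apply Rmult_lt_compat_l; [nra | exact Hsign]. }
  exists x. split; [exact Hx|].
  rewrite (HEJ_pred q nu Hq Hnu). fold p c g. unfold phi in Hphix. rewrite Hphix. apply Rmult_0_r.
Qed.

Lemma HEJ_succ_root : exists x, a < x < b /\ HEJ q (nu + 1) x = 0.
Proof.
  pose proof (hej_series_continuous q nu Hq Hnu) as Hg. fold g in Hg.
  pose proof (pow2_in_unit_interval q Hq) as Hp. fold p in Hp.
  assert (Hdiv : forall X, g X = 0 -> g (X / p) = - c * g (p * X)).
  { intros X HX. unfold g. rewrite (hej_series_rec q nu Hq Hnu (X / p)). fold p c g.
    replace (p * (X / p)) with X by (field; lra). rewrite HX. ring. }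
  set (phi := fun x => g (x ^ 2) - g (x ^ 2 / p)).
  assert (Hphi : forall x, continuity_pt phi x).
  { intro x. apply (continuity_pt_minus (fun y => g (y ^ 2)) (fun y => g (y ^ 2 / p)));
      apply continuity_pt_comp_everywhere; try exact Hg; reg; lra. }
  destruct (IVT_open phi a b Hphi ltac:(lra)) as [x [Hx Hphix]].
  { unfold phi. rewrite Ha, Hb, (Hdiv _ Ha), (Hdiv _ Hb). assert (0 < c) by apply exp_pos.
    replace ((0 - - c * g (p * a ^ 2)) * (0 - - c * g (p * b ^ 2)))
      with ((c * c) * (g (p * a ^ 2) * g (p * b ^ 2))) by ring.
    rewrite <- (Rmult_0_r (c * c)). apply Rmult_lt_compat_l; [nra | exact Hsign]. }
  exists x. split; [exact Hx|].
  pose proof (HEJ_succ q nu Hq Hnu x ltac:(lra)) as H. fold p g in H.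
  unfold phi in Hphix. rewrite Hphix, Rmult_0_r in H.
  destruct (Rmult_integral _ _ H) as [|Hx2]; [assumption|].
  pose proof (pow_lt x 2 ltac:(lra)). lra.
Qed.
End Roots.

Theorem lemma3p6 (q nu a b : R) :
  0 < q < 1 -> -1 < nu ->
  0 < a -> a < b ->
  HEJ q nu a = 0 -> HEJ q nu b = 0 ->
  (forall x, a < x < b -> HEJ q nu x <> 0) ->
  (exists x, a < x < b /\ HEJ q (nu - 1) x = 0) /\
  (exists x, a < x < b /\ HEJ q (nu + 1) x = 0).
Proof.
  intros Hq Hnu Ha Hab HA HB Hmid.
  apply (HEJ_root_iff q nu a Hq Ha) in HA. apply (HEJ_root_iff q nu b Hq ltac:(lra)) in HB.
  assert (Hsign : hej_series q nu (q ^ 2 * a ^ 2) * hej_series q nu (q ^ 2 * b ^ 2) < 0).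
  { apply hej_series_roots_shift_sign; auto.
    - nra.
    - intros Y HY HgY.
      assert (Hs : a < sqrt Y < b).
      { rewrite <- (sqrt_pow2 a), <- (sqrt_pow2 b) by lra.
        pose proof (pow2_ge_0 a). split; apply sqrt_lt_1_alt; lra. }
      apply (Hmid (sqrt Y) Hs), HEJ_root_iff; [exact Hq | lra |].
      rewrite pow2_sqrt by (pose proof (pow2_ge_0 a); lra). exact HgY. }
  split; [apply HEJ_pred_root | apply HEJ_succ_root]; auto; lra.
Qed.
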